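(* Let $X,Y$ be real-valued random variables on a probability space, let $\mu$ be the law of $(X,Y)$ on $\mathbb{R}^2$, $\mu_X,\mu_Y$ the laws of $X,Y$, and $\mu_{XY}=\mu_X\times\mu_Y$. If $\mu\ll\mu_{XY}$ and $L=\frac{d\mu}{d\mu_{XY}}$ is a version of the Radon–Nikodym derivative, then \[\mu_{XY}(\{(x,y)\in\mathbb{R}^2: L(x,y)>1\})<1\quad\text{and}\quad \mu_{XY}(\{(x,y)\in\mathbb{R}^2: L(x,y)<1\})<1.\]
   Context: $\mu_{XY}$ is the unique probability measure on the Borel sets of $\mathbb{R}^2$ with $\mu_{XY}(A\times B)=\mu_X(A)\mu_Y(B)$. *)

From HB Require Import structures.
From mathcomp Require Import all_boot all_order all_algebra.
From mathcomp Require Import all_classical all_reals all_analysis.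
From mathcomp Require Import measurable_realfun.
Set Implicit Arguments. Unset Strict Implicit. Unset Printing Implicit Defensive.
Import Order.TTheory GRing.Theory Num.Theory.
Local Open Scope classical_set_scope.
Local Open Scope ring_scope.

(* Law of the random vector (X,Y) on R^2 = R * R (product sigma-algebra,
   which is the Borel sigma-algebra of R^2): the pushforward of P by t |-> (X t, Y t). *)
Definition joint_law d (T : measurableType d) (R : realType) (P : probability T R)
  (X Y : T -> R) : set (R * R) -> \bar R :=
  fun A => P ((fun t => (X t, Y t)) @^-1` A).

From HB Require Import structures.
From mathcomp Require Import all_boot all_order all_algebra.
From mathcomp Require Import all_classical all_reals all_analysis.
From mathcomp Require Import measurable_realfun.
Import Order.TTheory GRing.Theory Num.Theory.
Set Implicit Arguments. Unset Strict Implicit. Unset Printing Implicit Defensive.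
Local Open Scope classical_set_scope.
Local Open Scope ring_scope.
Local Open Scope ereal_scope.

(* If nu(L > 1) = 1, then mu(L > 1) = int_(L > 1) L dnu > nu(L > 1) = 1, which is
   impossible for a probability mu. If nu(L < 1) = 1, then {L >= 1} is nu-null,
   hence mu-null, so mu(L < 1) = 1, whereas int_(L < 1) L dnu < nu(L < 1) = 1.
   Both strict inequalities rest on the fact that a strictly positive function
   has a strictly positive integral over any set of positive measure. *)

Section strict_integral_inequalities.
Context d (T : measurableType d) (R : realType) (mu : {measure set T -> \bar R}).
Variable D : set T.
Hypothesis mD : measurable D.

Lemma ge0_integral_gt0 (f : T -> \bar R) : measurable_fun D f ->
  (forall x, D x -> 0 < f x) -> 0 < mu D -> 0 < \int[mu]_(x in D) f x.
Proof.
move=> mf f_gt0 muD_gt0; rewrite lt_neqAle integral_ge0 ?andbT; last first.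
  by move=> x /f_gt0 /ltW.
apply/eqP => /esym intf0.
have : \int[mu]_(x in D) `|f x| = 0.
  by rewrite -intf0; apply: eq_integral => x /[!inE] /f_gt0 /ltW /gee0_abs.
move=> /(ae_eq_integral_abs mu mD mf) [N [mN muN0 DN]].
suff : mu D <= mu N by rewrite muN0 leNgt muD_gt0.
apply: le_measure; rewrite ?inE //.
by move=> x Dx; apply: DN => /(_ Dx) fx0; move: (f_gt0 x Dx); rewrite fx0 ltxx.
Qed.

Lemma ge0_lt_integral (f g : T -> \bar R) :
  measurable_fun D f -> measurable_fun D g ->
  (forall x, D x -> 0 <= f x) -> (forall x, D x -> f x < g x) ->
  0 < mu D -> \int[mu]_(x in D) f x < +oo ->
  \int[mu]_(x in D) f x < \int[mu]_(x in D) g x.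
Proof.
move=> mf mg f_ge0 fg muD_gt0 intf_fin.
have f_fin x : D x -> f x \is a fin_num.
  by move=> Dx; rewrite ge0_fin_numE ?f_ge0 // (lt_le_trans (fg x Dx)) ?leey.
have -> : \int[mu]_(x in D) g x =
    \int[mu]_(x in D) f x + \int[mu]_(x in D) (g x - f x).
  rewrite -ge0_integralD //; last 2 first.
  - by move=> x Dx; rewrite sube_ge0 ?f_fin // ltW // fg.
  - exact: emeasurable_funB.
  by apply: eq_integral => x /[!inE] Dx; rewrite addeC subeK ?f_fin.
rewrite lteDl ?ge0_fin_numE ?integral_ge0 //.
apply: ge0_integral_gt0 => //; first exact: emeasurable_funB.
by move=> x Dx; rewrite sube_gt0 ?fg.
Qed.

Lemma measure_lt_integral (c : R) (f : T -> \bar R) : measurable_fun D f ->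
  (0 <= c)%R -> (forall x, D x -> c%:E < f x) -> 0 < mu D -> mu D < +oo ->
  c%:E * mu D < \int[mu]_(x in D) f x.
Proof.
move=> mf c_ge0 cf muD_gt0 muD_fin; rewrite -integral_cst //.
apply: ge0_lt_integral => //.
by rewrite integral_cst // lte_mul_pinfty.
Qed.

Lemma integral_lt_measure (c : R) (f : T -> \bar R) : measurable_fun D f ->
  (0 < c)%R -> (forall x, D x -> f x < c%:E) -> 0 < mu D -> mu D < +oo ->
  \int[mu]_(x in D) f x < c%:E * mu D.
Proof.
move=> mf c_gt0 fc muD_gt0 muD_fin.
have fpos_lt_c x : D x -> f^\+ x < c%:E by move=> Dx; rewrite funeposE gt_max fc.
have intfpos_lt : \int[mu]_(x in D) f^\+ x < c%:E * mu D.
  rewrite -integral_cst //; apply: ge0_lt_integral => //.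
    exact: measurable_funepos.
  apply: (@le_lt_trans _ _ (c%:E * mu D)); last first.
    by rewrite lte_mul_pinfty ?lee_fin ?ltW.
  rewrite -integral_cst //; apply: ge0_le_integral => //.
  - exact: measurable_funepos.
  - by move=> x /fpos_lt_c /ltW.
apply: le_lt_trans intfpos_lt; rewrite integralE.
by rewrite -[leRHS]sube0 leeB // integral_ge0 // => x _; exact: funeneg_ge0.
Qed.

End strict_integral_inequalities.

Section joint_law_probability.
Context d (T : measurableType d) (R : realType) (P : probability T R)
  (X Y : {mfun T >-> R}).

Let pair_mfun : {mfun T >-> (R * R)%type} :=
  MeasurableFun.Pack (MeasurableFun.Class (isMeasurableFun.Build _ _ _ _
    (fun t => (X t, Y t)) (measurable_fun_pair (measurable_funPT X) (measurable_funPT Y)))).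

HB.instance Definition _ :=
  Probability.copy (joint_law P X Y) (distribution P pair_mfun).

End joint_law_probability.

Section density_level_sets.
Context d (T : measurableType d) (R : realType) (mu nu : probability T R).
Variable L : T -> \bar R.
Hypothesis mL : measurable_fun setT L.
Hypothesis mu_density :
  forall A, measurable A -> mu A = \int[nu]_(x in A) L x.

Let measurable_gt1 : measurable [set x | 1%:E < L x].
Proof. by rewrite -[X in measurable X]setTI; exact: measurable_lte. Qed.

Let measurable_lt1 : measurable [set x | L x < 1%:E].
Proof. by rewrite -[X in measurable X]setTI; exact: measurable_lte. Qed.

Let nu_fin A : measurable A -> nu A < +oo.
Proof. by move=> mA; rewrite (le_lt_trans (probability_le1 _ mA)) ?ltey. Qed.

Lemma density_gt1_measure_lt1 : nu [set x | 1%:E < L x] < 1.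
Proof.
set D := [set x | _].
have [->|nuD_neq0] := eqVneq (nu D) 0; first exact: lte01.
rewrite -[nu D]mul1e (lt_le_trans _ (probability_le1 mu measurable_gt1)) //.
rewrite mu_density //; apply: measure_lt_integral => //.
- exact: measurable_funTS.
- by rewrite lt0e nuD_neq0 measure_ge0.
- exact: nu_fin.
Qed.

Lemma density_lt1_measure_lt1 : mu `<< nu -> nu [set x | L x < 1%:E] < 1.
Proof.
move=> mu_ll_nu; set D := [set x | _].
rewrite ltNge; apply/negP => nuD_ge1.
have nuD1 : nu D = 1 by apply/eqP; rewrite eq_le probability_le1.
have muD1 : mu D = 1.
  have nuC0 : nu (~` D) = 0 by rewrite probability_setC // nuD1 subee.
  have muC0 : mu (~` D) = 0.
    exact: (null_content_dominatesP _ _).1 mu_ll_nu _ (measurableC measurable_lt1) nuC0.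
  by have := probability_setC mu (measurableC measurable_lt1); rewrite setCK muC0 sube0.
have : mu D < 1%:E * nu D.
  rewrite mu_density //; apply: integral_lt_measure => //.
  - exact: measurable_funTS.
  - exact: lt_le_trans lte01 nuD_ge1.
  - exact: nu_fin.
by rewrite muD1 nuD1 mule1 ltxx.
Qed.

End density_level_sets.

Local Close Scope ereal_scope.
Theorem proposition3 (d : measure_display) (T : measurableType d) (R : realType)
  (P : probability T R) (X Y : {RV P >-> R}) (L : R * R -> \bar R) :
  joint_law P X Y `<< (distribution P X \x distribution P Y)%E ->
  measurable_fun [set: (R * R)%type] L ->
  (forall A : set (R * R), measurable A ->
     joint_law P X Y A = (\int[(distribution P X \x distribution P Y)%E]_(z in A) L z)%E) ->
  ((distribution P X \x distribution P Y) [set z | 1%:E < L z] < 1%:E)%E /\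
  ((distribution P X \x distribution P Y) [set z | L z < 1%:E] < 1%:E)%E.
Proof.
move=> mu_ll_nu mL mu_density; split.
- exact: density_gt1_measure_lt1 mL mu_density.
- exact: density_lt1_measure_lt1 mL mu_density mu_ll_nu.
Qed.
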